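(* Let $k \geq 2$ and let $G_k=(V_k,E_k)$ be the bipartite graph with vertex set $V_k=\{x,y\}\cup \{u_i,v_i \mid 1\leq i\leq 2k-2\}$ and edge set $E_k=\{\{x,y\}\}\cup\{\{x,u_{2j-1}\},\{x,v_{2j-1}\} \mid 1 \leq j\leq k-1\}$. Let $G$ be a graph that contains $G_k$ as an induced subgraph, and let $t$ be the minimum integer for which $G$ is a $t$-interval-PCG, i.e. $G=t\textnormal{-}PCG(T,I_1,\ldots, I_t)$ for some edge-weighted tree $T$ and disjoint intervals $I_1,\ldots,I_t$. For $1\leq i\leq 2k-2$, write $[u_i,v_i]$ for the vertex set $\{u_i, u_{i+1}, \ldots, u_{2k-2}, y, v_{2k-2}, v_{2k-3},\ldots, v_i\}$. If for each $i$, $1\leq i\leq 2k-2$, the path $P_T(u_i,v_i)$ is the longest path in $T_{[u_i,v_i]}$, then $t\geq k$.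
   Context: All trees are unrooted with edges weighted by nonnegative reals. For leaves $u,v$ of a tree $T$, $P_T(u,v)$ is the unique path between them and $d_T(u,v)$ the sum of its edge weights; for a set $L$ of leaves, $T_L$ is the minimal subtree of $T$ containing $L$. Given a tree $T$ and $k\ge1$ disjoint intervals $I_1,\ldots,I_k$ of nonnegative reals, $k\textnormal{-}PCG(T,I_1,\ldots,I_k)$ (a $k$-interval-PCG, or multi-interval PCG) is the graph whose vertex set is the leaf set of $T$ and in which $\{u,v\}$ is an edge iff $d_T(u,v)\in I_i$ for some $i$, $1\le i\le k$. *)

From HB Require Import structures.
From mathcomp Require Import all_boot all_order all_algebra.
From mathcomp Require Import reals.
Set Implicit Arguments. Unset Strict Implicit. Unset Printing Implicit Defensive.
Import Order.TTheory GRing.Theory Num.Theory.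
Local Open Scope ring_scope.

Section Trees.
Variables (R : realType) (V : finType) (adj : rel V) (w : V -> V -> R).

Definition upath (a b : V) (p : seq V) : bool :=
  [&& path adj a p, last a p == b & uniq (a :: p)].

Fixpoint pweight (a : V) (p : seq V) : R :=
  if p is c :: q then w a c + pweight c q else 0.

Definition is_wtree : Prop :=
  [/\ symmetric adj, irreflexive adj,
      (forall a b, adj a b -> 0 <= w a b /\ w a b = w b a) &
      (forall a b, exists! p, upath a b p)].

Definition is_leaf (z : V) : bool := #|[set c | adj z c]| == 1%N.

(* vertex set of the minimal subtree T_L containing L *)
Definition in_span (L : {set V}) (z : V) : Prop :=
  exists a b p, [/\ a \in L, b \in L, upath a b p & z \in a :: p].

Definition longest_in (L : {set V}) (a b : V) : Prop :=
  forall p c d q, upath a b p -> in_span L c -> in_span L d -> upath c d q ->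
    pweight c q <= pweight a p.
End Trees.

(* G = t-PCG(T, I_1..I_t), the leaves of T being identified with the vertices
   of G via the bijection f from V(G) onto the leaves of T *)
Definition PCG_rep (R : realType) (VG : finType) (eG : rel VG) (t : nat)
  (VT : finType) (adj : rel VT) (w : VT -> VT -> R) (I : 'I_t -> interval R)
  (f : VG -> VT) : Prop :=
  [/\ (0 < t)%N, is_wtree adj w,
      (forall i x, x \in I i -> 0 <= x),
      (forall i j, i != j -> forall x, ~~ ((x \in I i) && (x \in I j))) &
      [/\ injective f,
      (forall z, is_leaf adj z <-> exists g, f g = z) &
      (forall a b, a != b ->
         (eG a b <-> forall p, upath adj (f a) (f b) p ->
                       exists i, pweight w (f a) p \in I i))]].

Definition is_tPCG (R : realType) (VG : finType) (eG : rel VG) (t : nat) : Prop :=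
  exists (VT : finType) (adj : rel VT) (w : VT -> VT -> R)
         (I : 'I_t -> interval R) (f : VG -> VT), PCG_rep eG adj w I f.

(* The graph G_k. Vertices: inl false = x, inl true = y,
   inr (false, j) = u_{j+1}, inr (true, j) = v_{j+1}, for j : 'I_(2k-2). *)
Definition Gk_vertex (k : nat) : finType := (bool + (bool * 'I_(2 * k - 2)))%type.

Definition Gk_edge (k : nat) (a b : Gk_vertex k) : bool :=
  match a, b with
  | inl false, inl true | inl true, inl false => true
  | inl false, inr (_, j) | inr (_, j), inl false => ~~ odd j
  | _, _ => false
  end.

Definition Gk_u (k : nat) (j : 'I_(2 * k - 2)) : Gk_vertex k := inr (false, j).
Definition Gk_v (k : nat) (j : 'I_(2 * k - 2)) : Gk_vertex k := inr (true, j).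

(* [u_{i+1}, v_{i+1}] = {u_j, v_j | j >= i+1} ∪ {y} *)
Definition Gk_seg (k : nat) (i : 'I_(2 * k - 2)) : {set Gk_vertex k} :=
  [set z : Gk_vertex k | match z with inl b => b | inr (_, j) => (i <= j)%N end].

From HB Require Import structures.
From mathcomp Require Import all_boot all_order all_algebra.
From mathcomp Require Import reals.
From mathcomp Require Import lra zify.
Import Order.TTheory GRing.Theory Num.Theory.

Set Implicit Arguments.
Unset Strict Implicit.
Unset Printing Implicit Defensive.

(* Fix x and write M_i = max(d(x,u_i), d(x,v_i)).  Since P(u_i,v_i) is a
   longest path of the subtree spanned by [u_i,v_i], the four-point condition
   of tree metrics gives d(x,z) <= M_i for every z in [u_i,v_i]; hence
   M_1 >= M_2 >= ... >= M_{2k-2} >= d(x,y).  As x is adjacent to both or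
   to neither of u_i, v_i according to the parity of i, M_i lies in some
   interval exactly for odd i, and so does d(x,y).  The k "inside" values are
   separated by "outside" values, so by convexity no two of them share an
   interval: t >= k. *)

Lemma split_first_mem (T : eqType) (S : seq T) z q : last z q \in S ->
  exists q1 q2, [/\ q = q1 ++ q2, last z q1 \in S &
                    all [predC S] (belast z q1)].
Proof.
elim: q z => [|c q IH] z /= Sq; first by exists [::], [::].
have [Sz | Sz] := boolP (z \in S); first by exists [::], (c :: q).
have [q1 [q2 [-> Sq1 notS]]] := IH c Sq.
by exists (c :: q1), q2; rewrite /= Sz Sq1.
Qed.

Lemma last_rev_belast (T : Type) (a : T) p : last (last a p) (rev (belast a p)) = a.
Proof. by case: p => [|c p] //=; rewrite rev_cons last_rcons. Qed.

Lemma mem_itv_between d (T : porderType d) (J : interval T) (a b c : T) :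
  (a <= b <= c)%O -> a \in J -> c \in J -> b \in J.
Proof.
case: J => l r /andP[ab bc]; rewrite !itv_boundlr => /andP[la _] /andP[_ cr].
by rewrite (le_trans la) ?(le_trans _ cr) ?leBSide.
Qed.

Lemma alternating_itv_card d (T : porderType d) t n (J : 'I_t -> interval T)
    (s : nat -> T) :
  (forall m p, (m <= p <= n.*2)%N -> (s p <= s m)%O) ->
  (forall c, (c <= n)%N -> exists i, s c.*2 \in J i) ->
  (forall c i, (c < n)%N -> s c.*2.+1 \notin J i) ->
  (n < t)%N.
Proof.
move=> s_anti s_even s_odd.
have [idx idxP] := @fin_all_exists _ (fun=> 'I_t)
  (fun (c : 'I_n.+1) i => s c.*2 \in J i) (fun c => s_even c (ltn_ord c)).
have idx_inj : injective idx.
  move=> c c'; wlog lecc' : c c' / (c <= c')%N => [hw e|e].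
    by case/orP: (leq_total c c') => h; [|apply/esym]; apply: hw.
  apply/ord_inj/eqP; rewrite eqn_leq lecc' leqNgt; apply/negP => ltcc'.
  have lt_n : (c < n)%N by have := ltn_ord c'; lia.
  suff : s c.*2.+1 \in J (idx c) by rewrite (negPf (s_odd c (idx c) lt_n)).
  have := idxP c'; rewrite -e => J_c'.
  apply: (mem_itv_between _ J_c' (idxP c)).
  by rewrite !s_anti //; have := ltn_ord c'; lia.
by have := leq_card idx idx_inj; rewrite !card_ord.
Qed.

Local Open Scope ring_scope.

Section TreeMetric.
Variables (R : realType) (V : finType) (adj : rel V) (w : V -> V -> R).
Hypothesis adj_sym : symmetric adj.
Hypothesis w_ge0_sym : forall a b, adj a b -> 0 <= w a b /\ w a b = w b a.
Hypothesis upath_ex1 : forall a b, exists! p, upath adj a b p.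

Lemma pweight_cat a p1 p2 :
  pweight w a (p1 ++ p2) = pweight w a p1 + pweight w (last a p1) p2.
Proof. by elim: p1 a => [|c p1 IH] a /=; rewrite ?add0r // IH addrA. Qed.

Lemma pweight_ge0 a p : path adj a p -> 0 <= pweight w a p.
Proof.
elim: p a => [|c p IH] a //= /andP[ac cp].
by rewrite addr_ge0 ?IH ?(w_ge0_sym ac).1.
Qed.

Lemma pweight_rev a p : path adj a p ->
  pweight w (last a p) (rev (belast a p)) = pweight w a p.
Proof.
elim: p a => [|c p IH] a //= /andP[ac cp].
rewrite rev_cons -cats1 pweight_cat IH // last_rev_belast /= addr0 addrC.
by rewrite (w_ge0_sym ac).2.
Qed.

Lemma upath_cat a b p1 p2 : upath adj a b (p1 ++ p2) ->
  upath adj a (last a p1) p1 /\ upath adj (last a p1) b p2.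
Proof.
rewrite /upath cat_path last_cat -cat_cons cat_uniq.
move=> /and3P[/andP[p1P p2P] p2L /and3P[u1 u2 u3]].
rewrite p1P p2P p2L u1 eqxx /= u3 andbT; split => //.
by apply: contra u2 => last_p2; apply/hasP; exists (last a p1); rewrite ?mem_last.
Qed.

Lemma upath_rev a b p : upath adj a b p -> upath adj b a (rev (belast a p)).
Proof.
rewrite /upath => /and3P[pP /eqP <- pU].
rewrite last_rev_belast eqxx rev_path -rev_rcons -lastI rev_uniq pU !andbT.
by rewrite (@eq_path _ _ adj) // => x y; rewrite adj_sym.
Qed.

Lemma upath_eq a b p q : upath adj a b p -> upath adj a b q -> p = q.
Proof. by case: (upath_ex1 a b) => r [_ uniq_r] /uniq_r <- /uniq_r <-. Qed.

Lemma upath_ex a b : exists p, upath adj a b p.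
Proof. by case: (upath_ex1 a b) => p [pP _]; exists p. Qed.

Definition tpath a b := xchoose (upath_ex a b).
Definition dist a b := pweight w a (tpath a b).

Lemma tpathP a b : upath adj a b (tpath a b).
Proof. exact: xchooseP. Qed.

Lemma distE a b p : upath adj a b p -> dist a b = pweight w a p.
Proof. by move=> pP; rewrite /dist (upath_eq (tpathP a b) pP). Qed.

Lemma upath_weightP (P : R -> Prop) a b :
  (forall p, upath adj a b p -> P (pweight w a p)) <-> P (dist a b).
Proof. by split=> [/(_ _ (tpathP a b)) // | Pd p /distE <-]. Qed.

Lemma dist_ge0 a b : 0 <= dist a b.
Proof. by have /and3P[pP _ _] := tpathP a b; exact: pweight_ge0. Qed.

Lemma distC a b : dist a b = dist b a.
Proof.
have /and3P[pP /eqP pL _] := tpathP a b.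
by rewrite (distE (upath_rev (tpathP a b))) -[X in pweight w X _]pL pweight_rev.
Qed.

Lemma dist_split a b p m : upath adj a b p -> m \in a :: p ->
  dist a b = dist a m + dist m b.
Proof.
move=> pP m_p; case/splitPl: m_p pP => p1 p2 <- pP.
have [p1P p2P] := upath_cat pP.
by rewrite (distE pP) (distE p1P) (distE p2P) pweight_cat.
Qed.

Lemma upath_cat_disjoint a m b q r : upath adj a m q -> upath adj m b r ->
  all [predC m :: r] (belast a q) -> upath adj a b (q ++ r).
Proof.
move=> /and3P[qP /eqP qL qU] /and3P[rP rL]; rewrite cons_uniq => /andP[m_r rU] qr.
rewrite /upath cat_path qP last_cat qL rP rL -cat_cons cat_uniq qU rU /= andbT.
apply/hasPn => c c_r; rewrite lastI qL mem_rcons inE negb_or.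
apply/andP; split; first by apply: contraNneq m_r => <-.
by apply: contraL c_r => /(allP qr); rewrite inE negb_or => /andP[].
Qed.

Lemma path_projection u v p z : upath adj u v p -> exists2 m, m \in u :: p &
  dist z u = dist z m + dist m u /\ dist z v = dist z m + dist m v.
Proof.
move=> pP; have qP := tpathP z u.
have /split_first_mem[q1 [q2 [qE q1_last q1_out]]] : last z (tpath z u) \in u :: p.
  by case/and3P: qP => _ /eqP -> _; rewrite mem_head.
exists (last z q1) => //; split.
  by apply: dist_split qP _; rewrite qE -cat_cons mem_cat mem_last.
move: qP; rewrite qE => /upath_cat[q1P _].
case/splitPl: q1_last q1_out pP => p1 p2 p1_last q1_out /upath_cat[_].
rewrite p1_last => p2P.
have q1p2P : upath adj z v (q1 ++ p2).
  apply: upath_cat_disjoint q1P p2P _; apply: sub_all q1_out => c /=.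
  apply: contra; rewrite inE -cat_cons mem_cat => /predU1P[->|->]; last exact: orbT.
  by rewrite -p1_last mem_last.
by rewrite (distE q1p2P) (distE q1P) (distE p2P) pweight_cat.
Qed.

Lemma upath_mem_ordered u v p m n : upath adj u v p -> m \in u :: p -> n \in u :: p ->
  dist n v = dist n m + dist m v \/ dist m v = dist m n + dist n v.
Proof.
move=> + m_p; case/splitPl: m_p => p1 p2 <- pP.
rewrite -cat_cons mem_cat => /orP[n_p1|n_p2].
  left; move: pP; case/splitPl: n_p1 => r1 r2 <-.
  rewrite -catA => /upath_cat[_ r2p2P].
  by apply: dist_split r2p2P _; rewrite last_cat -cat_cons mem_cat mem_last.
by right; case/upath_cat: pP => _ p2P; apply: dist_split p2P _; rewrite inE n_p2 orbT.
Qed.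

Lemma dist_triangle a b c : dist a c <= dist a b + dist b c.
Proof.
have [m m_p [bmA bmC]] := path_projection b (tpathP a c).
rewrite (dist_split (tpathP a c) m_p) (distC a b) bmA bmC (distC a m).
by have := dist_ge0 b m; lra.
Qed.

Lemma dist_four_point x z u v :
  dist x z + dist u v <= Num.max (dist x u + dist z v) (dist x v + dist z u).
Proof.
have pP := tpathP u v.
have [m m_p [zmU zmV]] := path_projection z pP.
have [n n_p [xnU xnV]] := path_projection x pP.
have umV := dist_split pP m_p; have unV := dist_split pP n_p.
have xz_le := dist_triangle x m z; have xm_le := dist_triangle x n m.
have := distC m z; have := distC m u; have := distC n u; have := distC n m.
rewrite le_max; case: (upath_mem_ordered pP m_p n_p) => nmV.
  by move=> *; apply/orP; right; lra.
by move=> *; apply/orP; left; lra.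
Qed.

Lemma in_span_mem (L : {set V}) z : z \in L -> in_span adj L z.
Proof. by move=> zL; exists z, z, [::]; rewrite /upath /= eqxx zL mem_head. Qed.

Lemma longest_in_dist_le_max (L : {set V}) a b x z : longest_in adj w L a b ->
  in_span adj L a -> in_span adj L b -> in_span adj L z ->
  dist x z <= Num.max (dist x a) (dist x b).
Proof.
move=> ab_long aL bL zL.
have za_le : dist z a <= dist a b by apply: ab_long (tpathP a b) zL aL (tpathP z a).
have zb_le : dist z b <= dist a b by apply: ab_long (tpathP a b) zL bL (tpathP z b).
have := dist_four_point x z a b; rewrite !le_max => /orP[] ?; apply/orP.
  by left; lra.
by right; lra.
Qed.

End TreeMetric.

Lemma PCG_rep_edgeE (R : realType) (VG : finType) (eG : rel VG) t (VT : finType)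
    (adj : rel VT) (w : VT -> VT -> R) (I : 'I_t -> interval R) (f : VG -> VT)
    (upath_ex1 : forall a b, exists! p, upath adj a b p) a b :
  PCG_rep eG adj w I f -> a != b ->
  eG a b <-> exists i, dist w upath_ex1 (f a) (f b) \in I i.
Proof.
case=> _ _ _ _ [_ _ f_edge] /f_edge ->.
exact: (upath_weightP w upath_ex1 (fun r => exists i, r \in I i)).
Qed.

Theorem lemma2 (R : realType) (k : nat) (hk : (2 <= k)%N)
  (VG : finType) (eG : rel VG) (Gsym : symmetric eG) (Girr : irreflexive eG)
  (emb : Gk_vertex k -> VG) (emb_inj : injective emb)
  (emb_ind : forall a b, eG (emb a) (emb b) = Gk_edge a b)
  (t : nat) (VT : finType) (adj : rel VT) (w : VT -> VT -> R)
  (I : 'I_t -> interval R) (f : VG -> VT)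
  (Hrep : PCG_rep eG adj w I f)
  (Hmin : forall t', (0 < t' < t)%N -> ~ is_tPCG R eG t')
  (Hlong : forall i : 'I_(2 * k - 2),
     longest_in adj w [set f (emb z) | z in Gk_seg i]
                (f (emb (Gk_u i))) (f (emb (Gk_v i)))) :
  (k <= t)%N.
Proof.
have [_ [adj_sym _ w_ge0_sym upath_ex1] _ _ _] := Hrep.
pose d z := dist w upath_ex1 (f (emb (inl false))) (f (emb z)).
have adj_x_iff z : z != inl false -> Gk_edge (inl false) z <-> exists i, d z \in I i.
  move=> z_x; rewrite -emb_ind; apply: PCG_rep_edgeE Hrep _.
  by rewrite (inj_eq emb_inj) eq_sym.
pose M (j : 'I_(2 * k - 2)) := Num.max (d (Gk_u j)) (d (Gk_v j)).
have d_le_M j z : z \in Gk_seg j -> d z <= M j.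
  have span z' : z' \in Gk_seg j ->
      in_span adj [set f (emb z) | z in Gk_seg j] (f (emb z')).
    by move=> z'_seg; apply/in_span_mem/imset_f.
  move=> z_seg; apply: (longest_in_dist_le_max adj_sym w_ge0_sym) (Hlong j) _ _ _;
    by apply: span; rewrite // inE /=.
have M_itv j : (exists i, M j \in I i) <-> ~~ odd j.
  by rewrite /M maxEle; case: ifP => _; rewrite -adj_x_iff.
pose s n := if insub n is Some j then M j else d (inl true).
have sM (j : 'I_(2 * k - 2)) : s j = M j by rewrite /s valK.
have s_top n : (2 * k - 2 <= n)%N -> s n = d (inl true).
  by move=> n_ge; rewrite /s insubN // -leqNgt.
suff : (k.-1 < t)%N by lia.
apply: (alternating_itv_card (s := s)).
- move=> m p /andP[le_mp le_p]; case: (ltnP p (2 * k - 2)) => [p_lt | p_ge].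
    have m_lt : (m < 2 * k - 2)%N by lia.
    by rewrite (sM (Ordinal p_lt)) (sM (Ordinal m_lt)) ge_max !d_le_M // inE /=.
  rewrite (s_top p p_ge); case: (ltnP m (2 * k - 2)) => [m_lt | m_ge].
    by rewrite (sM (Ordinal m_lt)) d_le_M // inE.
  by rewrite s_top.
- move=> c c_le; case: (ltnP c.*2 (2 * k - 2)) => [c_lt | c_ge].
    by rewrite (sM (Ordinal c_lt)); apply/M_itv; rewrite /= odd_double.
  by rewrite s_top //; apply/adj_x_iff.
- move=> c i c_lt; have c_lt' : (c.*2.+1 < 2 * k - 2)%N by lia.
  rewrite (sM (Ordinal c_lt')); apply/negP => M_in.
  by have := (M_itv _).1 (ex_intro _ i M_in); rewrite /= odd_double.
Qed.
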